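(* Let $\mathcal{L}$ be classical propositional logic $(\mathrm{Fm},\vdash_{\mathrm{CPL}})$ or intuitionistic propositional logic $(\mathrm{Fm},\vdash_{\mathrm{IPL}})$, and let $N\subseteq\mathrm{Fm}\times\mathrm{Fm}$ be closed under (WO). Let $P_N=\{(\alpha,\varphi)\mid(\alpha,\neg\varphi)\notin N\}$. Then $P_N$ is the largest relation $P\subseteq\mathrm{Fm}\times\mathrm{Fm}$ such that for all $\alpha,\varphi,\psi\in\mathrm{Fm}$: if $(\alpha,\varphi)\in P$ and $(\alpha,\psi)\in N$ then $Cn(\varphi,\psi)\neq\mathrm{Fm}$. (That is, $P_N$ has this property and contains every $P$ having it.)
   Context: $Cn(\Gamma)=\{\psi\mid\Gamma\vdash\psi\}$ for the relevant consequence relation $\vdash$, and $Cn(\varphi,\psi)=Cn(\{\varphi,\psi\})$. A normative system is a relation $N\subseteq\mathrm{Fm}\times\mathrm{Fm}$. $N$ is closed under (WO) if $(\alpha,\varphi)\in N$ and $\varphi\vdash\psi$ imply $(\alpha,\psi)\in N$. *)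

Inductive Fm : Type :=
| Var : nat -> Fm
| Bot : Fm
| Top : Fm
| And : Fm -> Fm -> Fm
| Or  : Fm -> Fm -> Fm
| Imp : Fm -> Fm -> Fm.

Definition Neg (a : Fm) : Fm := Imp a Bot.

Inductive Logic : Type := IPL | CPL.

Definition ext (G : Fm -> Prop) (a : Fm) : Fm -> Prop := fun x => G x \/ x = a.

Inductive derives (L : Logic) : (Fm -> Prop) -> Fm -> Prop :=
| d_ax   : forall G a, G a -> derives L G a
| d_topI : forall G, derives L G Top
| d_botE : forall G a, derives L G Bot -> derives L G a
| d_raa  : forall G a, L = CPL -> derives L (ext G (Neg a)) Bot -> derives L G a
| d_impI : forall G a b, derives L (ext G a) b -> derives L G (Imp a b)
| d_impE : forall G a b, derives L G (Imp a b) -> derives L G a -> derives L G b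
| d_andI : forall G a b, derives L G a -> derives L G b -> derives L G (And a b)
| d_andE1 : forall G a b, derives L G (And a b) -> derives L G a
| d_andE2 : forall G a b, derives L G (And a b) -> derives L G b
| d_orI1 : forall G a b, derives L G a -> derives L G (Or a b)
| d_orI2 : forall G a b, derives L G b -> derives L G (Or a b)
| d_orE  : forall G a b c, derives L G (Or a b) -> derives L (ext G a) c ->
             derives L (ext G b) c -> derives L G c.

Definition Cn (L : Logic) (G : Fm -> Prop) : Fm -> Prop := fun c => derives L G c.

Definition Cn2 (L : Logic) (p q : Fm) : Fm -> Prop := Cn L (fun x => x = p \/ x = q).

Definition derives1 (L : Logic) (p q : Fm) : Prop := derives L (fun x => x = p) q.

Definition NormSys := Fm -> Fm -> Prop.

Definition closed_WO (L : Logic) (N : NormSys) : Prop :=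
  forall a p q, N a p -> derives1 L p q -> N a q.

Definition PN (N : NormSys) : NormSys := fun a p => ~ N a (Neg p).

Definition consistent_with (L : Logic) (N P : NormSys) : Prop :=
  forall a p q, P a p -> N a q -> exists c, ~ Cn2 L p q c.


(* If [(a, ~p)] were in [N], then [p] and its negation would together derive
   everything; conversely, if [p, q |- Bot] then [q |- ~p], so (WO) would put
   [(a, ~p)] into [N] whenever [(a, q)] is there. *)

Section Consequence.

Variable L : Logic.

Lemma ext_mono (G K : Fm -> Prop) c :
  (forall x, G x -> K x) -> forall x, ext G c x -> ext K c x.
Proof. unfold ext; intros HGK x [Hx | Hx]; auto. Qed.

Lemma derives_weaken G a :
  derives L G a -> forall H, (forall x, G x -> H x) -> derives L H a.
Proof.
  induction 1; intros K HGK.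
  - apply d_ax; auto.
  - apply d_topI.
  - apply d_botE; auto.
  - apply d_raa; [assumption |]. apply IHderives, ext_mono, HGK.
  - apply d_impI, IHderives, ext_mono, HGK.
  - eapply d_impE; eauto.
  - apply d_andI; auto.
  - eapply d_andE1; eauto.
  - eapply d_andE2; eauto.
  - apply d_orI1; auto.
  - apply d_orI2; auto.
  - apply d_orE with a b; auto.
    + apply IHderives2, ext_mono, HGK.
    + apply IHderives3, ext_mono, HGK.
Qed.

Lemma Cn2_neg_full p c : Cn2 L p (Neg p) c.
Proof.
  apply d_botE. apply d_impE with p.
  - apply d_ax. now right.
  - apply d_ax. now left.
Qed.

Lemma derives1_neg_of_Cn2_Bot p q : Cn2 L p q Bot -> derives1 L q (Neg p).
Proof.
  intro Hbot. apply d_impI. apply derives_weaken with (1 := Hbot).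
  unfold ext; intros x [Hx | Hx]; auto.
Qed.

End Consequence.

Lemma PN_consistent_with L N : closed_WO L N -> consistent_with L N (PN N).
Proof.
  intros HWO a p q HPN HNq. exists Bot. intro Hbot.
  apply HPN, (HWO a q); [exact HNq |].
  now apply derives1_neg_of_Cn2_Bot.
Qed.

Lemma consistent_with_sub_PN L N P :
  consistent_with L N P -> forall a p, P a p -> PN N a p.
Proof.
  intros HP a p HPp HNneg.
  destruct (HP a p (Neg p) HPp HNneg) as [c Hc].
  apply Hc, Cn2_neg_full.
Qed.

Theorem proposition2p6 (L : Logic) (N : NormSys) (HWO : closed_WO L N) :
  consistent_with L N (PN N) /\
  (forall P : NormSys, consistent_with L N P -> forall a p, P a p -> PN N a p).
Proof.
  split.
  - now apply PN_consistent_with.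
  - apply consistent_with_sub_PN.
Qed.
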